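(* The wall $W$ has a $4$-track layout such that for all distinct edges $pq$ and $pr$, the vertices $q$ and $r$ are in distinct tracks.
   Context: The wall is the infinite graph $W$ with vertex set $\mathbb{Z}^2$ and edge set $\{(x,y)(x+1,y): x,y\in\mathbb{Z}\}\cup\{(x,y)(x,y+1): x,y\in\mathbb{Z},\ x+y\text{ even}\}$. A track in a graph is an independent set equipped with a total order $\preceq$. A $k$-track layout is a partition $(V_1,\dots,V_k)$ of the vertex set into tracks such that there are no edges $vw$ and $xy$ with $v\prec x$ in some track $V_i$ and $y\prec w$ in some track $V_j$. *)

From Stdlib Require Import ZArith.
Open Scope Z_scope.

Definition vertex := (Z * Z)%type.

Definition wall_edge (u v : vertex) : Prop :=
  (fst v = fst u + 1 /\ snd v = snd u) \/
  (fst v = fst u /\ snd v = snd u + 1 /\ Z.Even (fst u + snd u)).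

Definition wall_adj (u v : vertex) : Prop := wall_edge u v \/ wall_edge v u.

Definition total_order_on {V : Type} (S : V -> Prop) (le : V -> V -> Prop) : Prop :=
  (forall a, S a -> le a a) /\
  (forall a b, S a -> S b -> le a b -> le b a -> a = b) /\
  (forall a b c, S a -> S b -> S c -> le a b -> le b c -> le a c) /\
  (forall a b, S a -> S b -> le a b \/ le b a).

Definition track_prec {V : Type} (track : V -> nat) (ord : nat -> V -> V -> Prop)
  (a b : V) : Prop :=
  exists i, track a = i /\ track b = i /\ ord i a b /\ a <> b.

Definition is_track_layout {V : Type} (adj : V -> V -> Prop) (k : nat)
  (track : V -> nat) (ord : nat -> V -> V -> Prop) : Prop :=
  (forall v, (track v < k)%nat) /\
  (forall i, total_order_on (fun v => track v = i) (ord i)) /\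
  (forall u v, adj u v -> track u <> track v) /\
  (forall v w x y, adj v w -> adj x y ->
     track_prec track ord v x -> track_prec track ord y w -> False).

(** Put [(x, y)] on track [(x + 2y) mod 4] and order every track
    lexicographically.  This is already a 4-track layout of the full square
    grid.  Call [x + 2y] the weight of [(x, y)]: neighbours differ in weight
    by [+-1] or [+-2], so tracks are independent.  In a crossing [vw], [xy],
    the vector [z = x - v] has weight [0 (mod 4)] and lies lexicographically
    strictly between [0] and [D = (w - v) - (y - x)], a difference of two
    unit vectors that also has weight [0 (mod 4)]; this forces [D = (0, 2)],
    and the only vector strictly between [0] and [(0, 2)] is [(0, 1)], of
    weight 2.  The wall is a subgraph of the grid, so it inherits the layout.
    Two distinct neighbours of a vertex have weights differing by [1], [2] or
    [3] modulo 4, unless they are its upper and lower neighbours; but in the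
    wall every vertex has only one vertical neighbour. *)

From Stdlib Require Import ZArith Lia.
Open Scope Z_scope.

Definition grid_adj (u v : vertex) : Prop :=
  Z.abs (fst u - fst v) + Z.abs (snd u - snd v) = 1.

Definition grid_weight (v : vertex) : Z := fst v + 2 * snd v.

Definition grid_track (v : vertex) : nat := Z.to_nat (grid_weight v mod 4).

Definition lex_le (a b : vertex) : Prop :=
  fst a < fst b \/ (fst a = fst b /\ snd a <= snd b).

Lemma track_layout_subgraph {V : Type} (adj adj' : V -> V -> Prop) k track ord :
  (forall u v, adj u v -> adj' u v) ->
  is_track_layout adj' k track ord -> is_track_layout adj k track ord.
Proof.
  intros Hsub (Hk & Hord & Hind & Hcross).
  split; [|split; [|split]]; auto.
  intros v w x y Hvw Hxy; exact (Hcross v w x y (Hsub v w Hvw) (Hsub x y Hxy)).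
Qed.

Lemma vertex_neq (a b : vertex) : a <> b -> fst a <> fst b \/ snd a <> snd b.
Proof.
  destruct a as [a1 a2], b as [b1 b2]; cbn; intros Hab.
  destruct (Z.eq_dec a1 b1); [subst|]; auto.
  right; intros ->; auto.
Qed.

Lemma lex_le_total_order (S : vertex -> Prop) : total_order_on S lex_le.
Proof.
  unfold total_order_on, lex_le; repeat split.
  - intros; lia.
  - intros [a1 a2] [b1 b2] _ _ ? ?; cbn in *; f_equal; lia.
  - intros; lia.
  - intros; lia.
Qed.

Lemma grid_track_lt (v : vertex) : (grid_track v < 4)%nat.
Proof.
  unfold grid_track.
  pose proof (Z.mod_pos_bound (grid_weight v) 4 ltac:(lia)).
  lia.
Qed.

Lemma grid_track_eq (u v : vertex) :
  grid_track u = grid_track v -> exists k, grid_weight u = grid_weight v + 4 * k.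
Proof.
  unfold grid_track; intros Htrack.
  apply Z2Nat.inj in Htrack; try apply Z.mod_pos_bound; try lia.
  exists (grid_weight u / 4 - grid_weight v / 4).
  pose proof (Z.div_mod (grid_weight u) 4 ltac:(lia)).
  pose proof (Z.div_mod (grid_weight v) 4 ltac:(lia)).
  lia.
Qed.

Lemma grid_track_prec (a b : vertex) :
  track_prec grid_track (fun _ => lex_le) a b ->
  (exists k, grid_weight a = grid_weight b + 4 * k) /\
  (fst a < fst b \/ (fst a = fst b /\ snd a < snd b)).
Proof.
  intros (i & Ha & Hb & Hle & Hneq).
  split.
  - apply grid_track_eq; congruence.
  - apply vertex_neq in Hneq; unfold lex_le in Hle; lia.
Qed.

Lemma grid_track_layout : is_track_layout grid_adj 4 grid_track (fun _ => lex_le).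
Proof.
  split; [|split; [|split]].
  - apply grid_track_lt.
  - intros; apply lex_le_total_order.
  - intros u v Huv Htrack.
    destruct (grid_track_eq u v Htrack) as [k Hk].
    unfold grid_adj, grid_weight in *; lia.
  - intros v w x y Hvw Hxy Hvx Hyw.
    destruct (grid_track_prec v x Hvx) as [[k Hk] Hlt].
    destruct (grid_track_prec y w Hyw) as [[l Hl] Hlt'].
    unfold grid_adj, grid_weight in *; lia.
Qed.

Lemma wall_adj_grid_adj (u v : vertex) : wall_adj u v -> grid_adj u v.
Proof.
  unfold wall_adj, wall_edge, grid_adj.
  intros [[H | (H1 & H2 & _)] | [H | (H1 & H2 & _)]]; lia.
Qed.

Lemma wall_vertical_neighbour_unique (p q r : vertex) :
  wall_adj p q -> wall_adj p r -> fst q = fst p -> fst r = fst p -> q = r.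
Proof.
  destruct p as [p1 p2], q as [q1 q2], r as [r1 r2].
  unfold wall_adj, wall_edge, Z.Even; cbn [fst snd].
  intros [[Hq | (Hq1 & Hq2 & [m Hm])] | [Hq | (Hq1 & Hq2 & [m Hm])]]
         [[Hr | (Hr1 & Hr2 & [n Hn])] | [Hr | (Hr1 & Hr2 & [n Hn])]] Hq1' Hr1';
    f_equal; lia.
Qed.

Lemma grid_track_neighbours (p q r : vertex) :
  grid_adj p q -> grid_adj p r -> q <> r -> grid_track q = grid_track r ->
  fst q = fst p /\ fst r = fst p.
Proof.
  intros Hq Hr Hqr Htrack.
  destruct (grid_track_eq q r Htrack) as [k Hk].
  apply vertex_neq in Hqr.
  unfold grid_adj, grid_weight in *; lia.
Qed.

Theorem lemma13 :
  exists (track : vertex -> nat) (ord : nat -> vertex -> vertex -> Prop),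
    is_track_layout wall_adj 4 track ord /\
    (forall p q r : vertex, wall_adj p q -> wall_adj p r -> q <> r ->
       track q <> track r).
Proof.
  exists grid_track, (fun _ => lex_le); split.
  - apply (track_layout_subgraph wall_adj grid_adj).
    + apply wall_adj_grid_adj.
    + apply grid_track_layout.
  - intros p q r Hq Hr Hqr Htrack.
    destruct (grid_track_neighbours p q r (wall_adj_grid_adj p q Hq)
                (wall_adj_grid_adj p r Hr) Hqr Htrack) as [Hq1 Hr1].
    exact (Hqr (wall_vertical_neighbour_unique p q r Hq Hr Hq1 Hr1)).
Qed.
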